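(* Let $A^T\in\mathbb{R}^{n_o\times n}$, $G\in\mathbb{R}^{n\times n_h}$, $B^T\in\mathbb{R}^{n\times n}$ be the Toom-Cook matrices defined in the context, let $H\in F^{n_h\times n_h}$ and $X\in F^{n\times n}$ be floating point matrices, let $S=A^T(GHG^T\odot B^TXB)A$ be the exact result and $\hat S$ the floating point result computed as described in the context. Then $$|\hat S-S|\le |A^T|\big(|G|\,|H|\,|G^T|\odot|B^T|\,|X|\,|B|\big)|A|\,\big(2\alpha^{(n)}+2\beta^{(n)}+2\gamma^{(n_h)}+1\big)\varepsilon+O(\varepsilon^2)$$ entrywise, and $$\|\hat S-S\|_1\le \|A^T\|_1\|G\|_F\|H\|_F\|G^T\|_F\|B^T\|_F\|X\|_F\|B\|_F\|A\|_1\,\big(2\alpha^{(n)}+2\beta^{(n)}+2\gamma^{(n_h)}+1\big)\varepsilon+O(\varepsilon^2).$$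
   Context: Toom-Cook matrices: $n=n_o+n_h-1$, $p_1,\dots,p_n$ distinct reals, $N_i=1/\prod_{j\ne i}(p_i-p_j)$, $M_{i,j}$ the coefficient of $a^{j-1}$ in $\prod_{k\ne i}(a-p_k)$; $A^T_{i,j}=p_j^{i-1}$ ($i\le n_o$, $j\le n$), $G_{i,j}=p_i^{j-1}N_i$ ($i\le n$, $j\le n_h$), $B^T_{i,j}=M_{j,i}$; $A$, $G^T$, $B$ are the transposes. $\odot$ is the Hadamard product, $|\cdot|$ entrywise absolute value (matrix inequalities entrywise), $\|\cdot\|_1$ the induced matrix 1-norm (maximum absolute column sum), $\|\cdot\|_F$ the Frobenius norm. Floating point model: set $F$ of floating point numbers, unit roundoff $\varepsilon$, no overflow, $fl(y)=y(1+\delta)$, $fl(y\,\mathrm{op}\,z)=(y\,\mathrm{op}\,z)(1+\delta)$ with $|\delta|\le\varepsilon$; the matrix entries are stored rounded. Computation of $\hat S$: $U=fl(fl(G)\,H\,fl(G^T))$ and $V=fl(fl(B^T)\,X\,fl(B))$ are computed by matrix products (dot products of rows/columns), $W_{ij}=fl(U_{ij}V_{ij})$, and $\hat S=fl(fl(A^T)\,W\,fl(A))$. The same summation method is used for multiplication by a matrix and by its transpose. Constants: $\alpha^{(n)},\beta^{(n)},\gamma^{(n_h)}$ are constants such that for every row $a^T$ of $A^T$ (resp. $B^T$, resp. $G$) — equivalently every column of $A$ (resp. $B$, $G^T$) — and every floating point vector $y$ of matching length the computed dot product satisfies $|a^Ty-fl(fl(a^T)y)|\le|a^T|\,|y|\,c\,\varepsilon+O(\varepsilon^2)$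 with $c=\alpha^{(n)}$ (resp. $\beta^{(n)}$, $\gamma^{(n_h)}$). *)

From HB Require Import structures.
From mathcomp Require Import all_boot all_order all_algebra.
Set Implicit Arguments. Unset Strict Implicit. Unset Printing Implicit Defensive.
Import Order.TTheory GRing.Theory Num.Theory.
Local Open Scope ring_scope.

Section TC.
Variable R : rcfType.

Definition tc_dim (no nh : nat) : nat := (no + nh).-1.

(* N_i = 1 / prod_{j <> i} (p_i - p_j)   (indices are 0-based) *)
Definition tcN (n : nat) (p : 'I_n -> R) (i : 'I_n) : R :=
  (\prod_(j < n | j != i) (p i - p j))^-1.

(* prod_{k <> i} (a - p_k); M_{i,j} = its coefficient of a^j (0-based) *)
Definition tcMpoly (n : nat) (p : 'I_n -> R) (i : 'I_n) : {poly R} :=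
  \prod_(k < n | k != i) ('X - (p k)%:P).

Definition tcAT (no n : nat) (p : 'I_n -> R) : 'M[R]_(no, n) :=
  \matrix_(i < no, j < n) (p j ^+ i).
Definition tcG (n nh : nat) (p : 'I_n -> R) : 'M[R]_(n, nh) :=
  \matrix_(i < n, j < nh) (p i ^+ j * tcN p i).
Definition tcBT (n : nat) (p : 'I_n -> R) : 'M[R]_(n, n) :=
  \matrix_(i < n, j < n) (tcMpoly p j)`_i.

Definition absM (m n : nat) (M : 'M[R]_(m, n)) : 'M[R]_(m, n) :=
  map_mx (fun x => `|x|) M.
Definition hadamard (m n : nat) (A B : 'M[R]_(m, n)) : 'M[R]_(m, n) :=
  \matrix_(i < m, j < n) (A i j * B i j).
Definition norm1 (m n : nat) (M : 'M[R]_(m, n)) : R :=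
  \big[Num.max/0]_(j < n) \sum_(i < m) `|M i j|.
Definition frob (m n : nat) (M : 'M[R]_(m, n)) : R :=
  Num.sqrt (\sum_(i < m) \sum_(j < n) M i j ^+ 2).
Definition dotv (m : nat) (u v : 'rV[R]_m) : R := \sum_(k < m) u 0 k * v 0 k.

(* The floating point model: unit roundoff eps, set F of floating point numbers,
   rounding of stored values fl(y) = y(1+d), and floating multiplication
   fl(y*z) = (y*z)(1+d), |d| <= eps, results in F (no overflow). *)
Record fp_model := FPModel {
  fp_eps : R;
  fp_F : R -> Prop;
  fp_rnd : R -> R;
  fp_mul : R -> R -> R;
  fp_eps_ge0 : 0 <= fp_eps;
  fp_rnd_spec : forall y, exists2 d, `|d| <= fp_eps & fp_rnd y = y * (1 + d);
  fp_rnd_F : forall y, fp_F (fp_rnd y);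
  fp_mul_spec : forall y z, exists2 d, `|d| <= fp_eps & fp_mul y z = (y * z) * (1 + d);
  fp_mul_F : forall y z, fp_F (fp_mul y z)
}.

(* A summation method for dot products with the rows of C: [dot u y] is the
   computed value fl(u y) where u = fl(c^T) is a stored (rounded) row of C
   and y a floating point vector.  [dot_bound] says that c is a valid constant
   (alpha, beta, gamma in the paper): for every row c^T of C and every floating
   point vector y,
   |c^T y - fl(fl(c^T) y)| <= |c^T| |y| c eps + K0 eps^2 |c^T| |y|. *)
Definition dot_bound (fm : fp_model) (k m : nat) (C : 'M[R]_(k, m))
  (dot : 'rV[R]_m -> 'rV[R]_m -> R) (c K0 : R) : Prop :=
  forall (i : 'I_k) (y : 'rV[R]_m), (forall j, fp_F fm (y 0 j)) ->
    `|dotv (row i C) y - dot (map_mx (fp_rnd fm) (row i C)) y|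
      <= dotv (absM (row i C)) (absM y) * c * fp_eps fm
         + K0 * fp_eps fm ^+ 2 * dotv (absM (row i C)) (absM y).

Definition tc_exact (no n nh : nat) (AT : 'M[R]_(no, n)) (G : 'M[R]_(n, nh))
  (BT : 'M[R]_(n, n)) (H : 'M[R]_nh) (X : 'M[R]_n) : 'M[R]_no :=
  AT *m hadamard (G *m H *m G^T) (BT *m X *m BT^T) *m AT^T.

(* Floating point computation of S_hat:
   U = fl(fl(G) H fl(G^T)), V = fl(fl(B^T) X fl(B)) (products evaluated left to
   right, each entry a computed dot product), W_ij = fl(U_ij V_ij),
   S_hat = fl(fl(A^T) W fl(A)).  A product with a column of fl(C^T) is a
   dot product with the corresponding row of fl(C), computed with the same
   summation method. *)
Definition tc_computed (fm : fp_model) (no n nh : nat) (AT : 'M[R]_(no, n))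
  (G : 'M[R]_(n, nh)) (BT : 'M[R]_(n, n))
  (dotA dotB : 'rV[R]_n -> 'rV[R]_n -> R) (dotG : 'rV[R]_nh -> 'rV[R]_nh -> R)
  (H : 'M[R]_nh) (X : 'M[R]_n) : 'M[R]_no :=
  let rnd := fp_rnd fm in
  let U1 := \matrix_(i < n, j < nh) dotG (map_mx rnd (row i G)) (row j H^T) in
  let U := \matrix_(i < n, j < n) dotG (map_mx rnd (row j G)) (row i U1) in
  let V1 := \matrix_(i < n, j < n) dotB (map_mx rnd (row i BT)) (row j X^T) in
  let V := \matrix_(i < n, j < n) dotB (map_mx rnd (row j BT)) (row i V1) in
  let W := \matrix_(i < n, j < n) fp_mul fm (U i j) (V i j) in
  let Z := \matrix_(i < no, j < n) dotA (map_mx rnd (row i AT)) (row j W^T) in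
  \matrix_(i < no, j < no) dotA (map_mx rnd (row j AT)) (row i Z).

End TC.

From HB Require Import structures.
From mathcomp Require Import all_boot all_order all_algebra.
From mathcomp Require Import ring.
Import Order.TTheory GRing.Theory Num.Theory.
Set Implicit Arguments. Unset Strict Implicit. Unset Printing Implicit Defensive.
Local Open Scope ring_scope.

(* Every computed matrix is tracked as an approximation of its exact value:
   an entrywise majorant P and a relative error r with |Y0| <= P and
   |Y - Y0| <= P r.  Relative errors compose as (1 + r)(1 + s) - 1, both for
   products of approximations and for one further rounded dot product, whose
   a priori bound contributes the factor 1 + c eps + O(eps^2).  Following
   fl(G H G^T), fl(B^T X B), their rounded Hadamard product and fl(A^T W A)
   gives the majorant |A^T| (|G| |H| |G^T| o |B^T| |X| |B|) |A| and the relative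
   error (1 + d_a)^2 (1 + d_b)^2 (1 + d_g)^2 (1 + eps) - 1, whose first-order
   term is (2 alpha + 2 beta + 2 gamma + 1) eps.  The norm bound then follows
   from submultiplicativity of the 1-norm and of the Frobenius norm together
   with ||P o Q||_1 <= ||P||_F ||Q||_F (Cauchy-Schwarz on each column).
   Nothing specific to Toom-Cook matrices is used. *)

Section RelativeError.
Variable R : rcfType.
Implicit Types x y a b r s : R.

Definition rel_compose r s : R := (1 + r) * (1 + s) - 1.

Definition rel_dot (c k e : R) := c * e + k * e ^+ 2.

Definition approx x x0 a r := `|x0| <= a /\ `|x - x0| <= a * r.

Lemma approx_refl x : approx x x `|x| 0.
Proof. by split; rewrite // subrr normr0 mulr0. Qed.

Lemma approx_norm x x0 a r : approx x x0 a r -> `|x| <= a * (1 + r).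
Proof.
move=> [x0_le err_le]; rewrite -[x](subrK x0) mulrDr mulr1 [a + _]addrC.
exact: le_trans (ler_normD _ _) (lerD err_le x0_le).
Qed.

Lemma approx_mul x x0 a r y y0 b s :
  approx x x0 a r -> approx y y0 b s -> approx (x * y) (x0 * y0) (a * b) (rel_compose r s).
Proof.
move=> [x0_le x_err] hy; have [y0_le y_err] := hy.
split; first by rewrite normrM ler_pM.
have -> : x * y - x0 * y0 = (x - x0) * y + x0 * (y - y0) by ring.
have -> : a * b * rel_compose r s = a * r * (b * (1 + s)) + a * (b * s).
  by rewrite /rel_compose; ring.
apply: le_trans (ler_normD _ _) _; rewrite !normrM.
by apply: lerD; apply: ler_pM => //; apply: approx_norm hy.
Qed.

End RelativeError.

Section FirstOrder.
Variable R : rcfType.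
Implicit Types (c k : R) (f g : R -> R).

(* [f e = c e + O(e^2)] on [0, 1]; nonnegativity of [f] is what lets products of
   such functions be bounded factorwise. *)
Definition first_order c f :=
  exists2 K, 0 <= K & forall e, 0 <= e <= 1 -> 0 <= f e <= c * e + K * e ^+ 2.

Lemma first_order0 : first_order 0 (fun=> 0).
Proof. by exists 0 => // e _; rewrite !mul0r addr0 lexx. Qed.

Lemma first_order_id : first_order 1 id.
Proof. by exists 0 => // e /andP[e_ge0 _]; rewrite mul0r addr0 mul1r e_ge0 /=. Qed.

Lemma first_order_rel_dot c k : 0 <= c -> 0 <= k -> first_order c (rel_dot c k).
Proof.
move=> c_ge0 k_ge0; exists k => // e /andP[e_ge0 _]; rewrite lexx andbT.
by apply: addr_ge0; apply: mulr_ge0 => //; apply: exprn_ge0.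
Qed.

Lemma first_order_linear c f : first_order c f ->
  exists2 a, 0 <= a & forall e, 0 <= e <= 1 -> f e <= a * e.
Proof.
move=> [K K_ge0 hf]; exists (c + K) => [|e e01].
  have /andP[f1_ge0 f1_le] : 0 <= f 1 <= c * 1 + K * 1 ^+ 2.
    by apply: hf; rewrite ler01 lexx.
  by rewrite expr1n !mulr1 in f1_le; apply: le_trans f1_ge0 f1_le.
have /andP[_ fe_le] := hf e e01; apply: le_trans fe_le _; case/andP: e01 => e_ge0 e_le1.
by rewrite mulrDl lerD2l expr2 mulrA ler_piMr // mulr_ge0.
Qed.

Lemma first_order_rel_compose c1 c2 f g : first_order c1 f -> first_order c2 g ->
  first_order (c1 + c2) (fun e => rel_compose (f e) (g e)).
Proof.
move=> hf hg; have [K1 K1_ge0 f_le] := hf; have [K2 K2_ge0 g_le] := hg.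
have [a a_ge0 f_lin] := first_order_linear hf.
have [b b_ge0 g_lin] := first_order_linear hg.
exists (K1 + K2 + a * b) => [|e e01]; first by rewrite !addr_ge0 ?mulr_ge0.
have /andP[fe_ge0 fe_le] := f_le e e01; have /andP[ge_ge0 ge_le] := g_le e e01.
have fg_le := ler_pM fe_ge0 ge_ge0 (f_lin e e01) (g_lin e e01).
have -> : rel_compose (f e) (g e) = f e + g e + f e * g e by rewrite /rel_compose; ring.
rewrite !addr_ge0 ?mulr_ge0 //=.
have -> : (c1 + c2) * e + (K1 + K2 + a * b) * e ^+ 2 =
          c1 * e + K1 * e ^+ 2 + (c2 * e + K2 * e ^+ 2) + a * e * (b * e) by ring.
by rewrite !lerD.
Qed.

End FirstOrder.

Section EntrywiseBounds.
Variable R : rcfType.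

Lemma absM_ge0 m n (A : 'M[R]_(m, n)) i j : 0 <= absM A i j.
Proof. by rewrite mxE. Qed.

Lemma absM_tr m n (A : 'M[R]_(m, n)) : absM A^T = (absM A)^T.
Proof. by apply/matrixP => i j; rewrite !mxE. Qed.

Lemma normr_mulmx_le m n p (A : 'M[R]_(m, n)) (B : 'M[R]_(n, p)) i j :
  `|(A *m B) i j| <= (absM A *m absM B) i j.
Proof.
rewrite !mxE; apply: le_trans (ler_norm_sum _ _ _) _.
by apply: ler_sum => k _; rewrite !mxE normrM.
Qed.

Lemma ler_mulmx_scale m n p (A E : 'M[R]_(m, n)) (B : 'M[R]_(n, p)) s :
  (forall i j, A i j <= E i j * s) -> (forall i j, 0 <= B i j) ->
  forall i j, (A *m B) i j <= (E *m B) i j * s.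
Proof.
move=> le_AE B_ge0 i j; rewrite !mxE mulr_suml; apply: ler_sum => k _.
by rewrite mulrAC; apply: ler_wpM2r.
Qed.

Definition mx_approx m n (Y Y0 P : 'M[R]_(m, n)) r :=
  forall i j, approx (Y i j) (Y0 i j) (P i j) r.

Lemma mx_approx_refl m n (Y : 'M[R]_(m, n)) : mx_approx Y Y (absM Y) 0.
Proof. by move=> i j; rewrite mxE; apply: approx_refl. Qed.

Lemma mx_approx_tr m n (Y Y0 P : 'M[R]_(m, n)) r :
  mx_approx Y Y0 P r -> mx_approx Y^T Y0^T P^T r.
Proof. by move=> hY i j; rewrite !mxE. Qed.

End EntrywiseBounds.

Section FloatingProducts.
Variables (R : rcfType) (fm : fp_model R).
Local Notation eps := (fp_eps fm).

(* Entry (i, j) is the computed dot product of row i of Y with row j of C,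
   i.e. fl(Y C^T); rows of C are rounded before use, as in [tc_computed]. *)
Definition fl_mulmx_tr m p k (dot : 'rV[R]_m -> 'rV[R]_m -> R)
    (Y : 'M[R]_(p, m)) (C : 'M[R]_(k, m)) : 'M[R]_(p, k) :=
  \matrix_(i, j) dot (map_mx (fp_rnd fm) (row j C)) (row i Y).

Definition fl_sandwich m k dot (C : 'M[R]_(k, m)) (Y : 'M[R]_m) : 'M[R]_k :=
  fl_mulmx_tr dot (fl_mulmx_tr dot Y^T C)^T C.

Definition fl_hadamard m n (U V : 'M[R]_(m, n)) : 'M[R]_(m, n) :=
  \matrix_(i, j) fp_mul fm (U i j) (V i j).

Definition fl_mx m n (Y : 'M[R]_(m, n)) := forall i j, fp_F fm (Y i j).

Lemma fl_mulmx_tr_err m p k (C : 'M[R]_(k, m)) dot c K0 (Y : 'M[R]_(p, m)) :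
  dot_bound fm C dot c K0 -> fl_mx Y ->
  forall i j, `|fl_mulmx_tr dot Y C i j - (Y *m C^T) i j|
    <= (absM Y *m absM C^T) i j * rel_dot c `|K0| eps.
Proof.
move=> hdot flY i j.
have flYi : forall l, fp_F fm (row i Y 0 l) by move=> l; rewrite mxE.
have dotE : dotv (row j C) (row i Y) = (Y *m C^T) i j.
  by rewrite /dotv !mxE; apply: eq_bigr => l _; rewrite !mxE mulrC.
have absdotE : dotv (absM (row j C)) (absM (row i Y)) = (absM Y *m absM C^T) i j.
  by rewrite /dotv !mxE; apply: eq_bigr => l _; rewrite !mxE mulrC.
rewrite [fl_mulmx_tr _ _ _ _ _]mxE -dotE -absdotE distrC.
apply: le_trans (hdot j _ flYi) _.
set d := dotv _ _.
have d_ge0 : 0 <= d.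
  by apply: sumr_ge0 => l _; rewrite !mxE; apply: mulr_ge0.
rewrite /rel_dot mulrDr mulrA lerD2l [_ * d]mulrC.
apply: ler_wpM2l => //; apply: ler_wpM2r; last exact: ler_norm.
exact: exprn_ge0 (fp_eps_ge0 fm).
Qed.

Lemma fl_mulmx_tr_approx m p k (C : 'M[R]_(k, m)) dot c K0 (Y Y0 P : 'M[R]_(p, m)) w :
  0 <= c -> dot_bound fm C dot c K0 -> fl_mx Y -> mx_approx Y Y0 P w ->
  mx_approx (fl_mulmx_tr dot Y C) (Y0 *m C^T) (P *m absM C^T)
            (rel_compose w (rel_dot c `|K0| eps)).
Proof.
move=> c_ge0 hdot flY hY i j.
have normCT_le (A : 'M[R]_(p, m)) s : (forall i j, `|A i j| <= P i j * s) ->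
    `|(A *m C^T) i j| <= (P *m absM C^T) i j * s.
  move=> hA; apply: le_trans (normr_mulmx_le _ _ _ _) _.
  by apply: ler_mulmx_scale => [i' j'|]; [rewrite mxE; apply: hA | apply: absM_ge0].
split.
  by rewrite -[leRHS]mulr1; apply: normCT_le => i' j'; rewrite mulr1; case: (hY i' j').
have errE : ((Y - Y0) *m C^T) i j = (Y *m C^T) i j - (Y0 *m C^T) i j.
  by rewrite mulmxBl !mxE.
have Y_err : `|(Y *m C^T) i j - (Y0 *m C^T) i j| <= (P *m absM C^T) i j * w.
  by rewrite -errE; apply: normCT_le => i' j'; rewrite !mxE; case: (hY i' j').
have absY_le : (absM Y *m absM C^T) i j <= (P *m absM C^T) i j * (1 + w).
  apply: ler_mulmx_scale => [i' j'|]; last exact: absM_ge0.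
  by rewrite mxE; apply: approx_norm.
set d := rel_dot c `|K0| eps.
have d_ge0 : 0 <= d.
  have eps_ge0 := fp_eps_ge0 fm.
  by rewrite addr_ge0 ?mulr_ge0 ?exprn_ge0.
apply: le_trans (ler_distD ((Y *m C^T) i j) _ _) _.
have fl_err := le_trans (fl_mulmx_tr_err hdot flY i j) (ler_wpM2r d_ge0 absY_le).
have -> : (P *m absM C^T) i j * rel_compose w d =
          (P *m absM C^T) i j * (1 + w) * d + (P *m absM C^T) i j * w.
  by rewrite /rel_compose; ring.
exact: lerD fl_err Y_err.
Qed.

Lemma fl_sandwich_approx m k (C : 'M[R]_(k, m)) dot c K0 (Y Y0 P : 'M[R]_m) w :
  0 <= c -> dot_bound fm C dot c K0 -> (forall u y, fp_F fm (dot u y)) ->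
  fl_mx Y -> mx_approx Y Y0 P w ->
  mx_approx (fl_sandwich dot C Y) (C *m Y0 *m C^T) (absM C *m P *m absM C^T)
    (rel_compose (rel_compose w (rel_dot c `|K0| eps)) (rel_dot c `|K0| eps)).
Proof.
move=> c_ge0 hdot fl_dot flY hY.
have flYt : fl_mx Y^T by move=> i j; rewrite mxE.
have hCY := mx_approx_tr (fl_mulmx_tr_approx c_ge0 hdot flYt (mx_approx_tr hY)).
rewrite !trmx_mul !trmxK absM_tr trmxK in hCY.
by apply: (fl_mulmx_tr_approx c_ge0 hdot _ hCY) => i j; rewrite !mxE.
Qed.

Lemma fl_hadamard_approx m n (U U0 P V V0 Q : 'M[R]_(m, n)) r s :
  mx_approx U U0 P r -> mx_approx V V0 Q s ->
  mx_approx (fl_hadamard U V) (hadamard U0 V0) (hadamard P Q)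
    (rel_compose (rel_compose r s) eps).
Proof.
move=> hU hV i j; rewrite !mxE.
have [d d_le ->] := fp_mul_spec fm (U i j) (V i j).
rewrite -[U0 i j * V0 i j]mulr1 -[P i j * Q i j]mulr1.
apply: approx_mul (approx_mul (hU i j) (hV i j)) _.
by split; rewrite ?normr1 // [1 + d]addrC addrK mul1r.
Qed.

End FloatingProducts.

Section ToomCookError.
Variables (R : rcfType) (fm : fp_model R).

Lemma fl_sandwichE m k dot (C : 'M[R]_(k, m)) (Y : 'M[R]_m) :
  fl_sandwich fm dot C Y =
  \matrix_(i, j) dot (map_mx (fp_rnd fm) (row j C))
    (row i (\matrix_(i0, j0) dot (map_mx (fp_rnd fm) (row i0 C)) (row j0 Y^T))).
Proof.
apply/matrixP => i j; rewrite !mxE; congr dot.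
by apply/rowP => l; rewrite !mxE.
Qed.

Lemma tc_computedE no n nh (AT : 'M[R]_(no, n)) (G : 'M[R]_(n, nh)) (BT : 'M[R]_n)
    dotA dotB dotG H X :
  tc_computed fm AT G BT dotA dotB dotG H X =
  fl_sandwich fm dotA AT
    (fl_hadamard fm (fl_sandwich fm dotG G H) (fl_sandwich fm dotB BT X)).
Proof. by rewrite /tc_computed !fl_sandwichE. Qed.

Definition tc_rel_err (alpha beta gamma k e : R) :=
  let sandwich w c := rel_compose (rel_compose w (rel_dot c k e)) (rel_dot c k e) in
  sandwich (rel_compose (rel_compose (sandwich 0 gamma) (sandwich 0 beta)) e) alpha.

Lemma first_order_tc_rel_err (alpha beta gamma k : R) :
  0 <= alpha -> 0 <= beta -> 0 <= gamma -> 0 <= k ->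
  first_order (2 * alpha + 2 * beta + 2 * gamma + 1) (tc_rel_err alpha beta gamma k).
Proof.
move=> a_ge0 b_ge0 g_ge0 k_ge0.
have sandwich c cw w : 0 <= c -> first_order cw w -> first_order (cw + c + c)
    (fun e => rel_compose (rel_compose (w e) (rel_dot c k e)) (rel_dot c k e)).
  move=> c_ge0 hw; have hd := first_order_rel_dot c_ge0 k_ge0.
  exact: first_order_rel_compose (first_order_rel_compose hw hd) hd.
rewrite (_ : 2 * alpha + 2 * beta + 2 * gamma + 1 =
             (0 + gamma + gamma) + (0 + beta + beta) + 1 + alpha + alpha); last by ring.
have hU := sandwich gamma _ _ g_ge0 (@first_order0 R).
have hV := sandwich beta _ _ b_ge0 (@first_order0 R).
have hW := first_order_rel_compose (first_order_rel_compose hU hV) (@first_order_id R).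
exact: sandwich a_ge0 hW.
Qed.

Lemma tc_computed_approx no n nh (AT : 'M[R]_(no, n)) (G : 'M[R]_(n, nh))
    (BT : 'M[R]_n) dotA dotB dotG alpha beta gamma K0 H X :
  0 <= alpha -> 0 <= beta -> 0 <= gamma ->
  dot_bound fm AT dotA alpha K0 -> dot_bound fm BT dotB beta K0 ->
  dot_bound fm G dotG gamma K0 ->
  (forall u y, fp_F fm (dotA u y)) -> (forall u y, fp_F fm (dotB u y)) ->
  (forall u y, fp_F fm (dotG u y)) -> fl_mx fm H -> fl_mx fm X ->
  mx_approx (tc_computed fm AT G BT dotA dotB dotG H X) (tc_exact AT G BT H X)
    (absM AT *m hadamard (absM G *m absM H *m absM G^T)
                         (absM BT *m absM X *m absM BT^T) *m absM AT^T)
    (tc_rel_err alpha beta gamma `|K0| (fp_eps fm)).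
Proof.
move=> a_ge0 b_ge0 g_ge0 hA hB hG flA flB flG flH flX.
have hU := fl_sandwich_approx g_ge0 hG flG flH (mx_approx_refl H).
have hV := fl_sandwich_approx b_ge0 hB flB flX (mx_approx_refl X).
have flW : fl_mx fm (fl_hadamard fm (fl_sandwich fm dotG G H) (fl_sandwich fm dotB BT X)).
  by move=> i j; rewrite mxE; apply: fp_mul_F.
rewrite tc_computedE.
exact: fl_sandwich_approx a_ge0 hA flA flW (fl_hadamard_approx fm hU hV).
Qed.

End ToomCookError.

Section MatrixNorms.
Variable R : rcfType.

Lemma cauchy_schwarz_sum n (a b : 'I_n -> R) :
  (\sum_i a i * b i) ^+ 2 <= (\sum_i a i ^+ 2) * (\sum_i b i ^+ 2).
Proof.
have lagrange : \sum_i \sum_j (a i * b j - a j * b i) ^+ 2 =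
    ((\sum_i a i ^+ 2) * (\sum_i b i ^+ 2) - (\sum_i a i * b i) ^+ 2) *+ 2.
  rewrite expr2 !mulr_suml -sumrB mulr2n.
  under [in RHS]eq_bigr do rewrite !mulr_sumr -sumrB.
  rewrite [X in _ = _ + X]exchange_big -big_split /=; apply: eq_bigr => i _.
  by rewrite -big_split /=; apply: eq_bigr => j _; ring.
rewrite -subr_ge0 -(pmulrn_lge0 _ (isT : 0 < 2)%N) -lagrange.
by apply: sumr_ge0 => i _; apply: sumr_ge0 => j _; apply: sqr_ge0.
Qed.

Lemma norm1_ge0 m n (A : 'M[R]_(m, n)) : 0 <= norm1 A.
Proof. exact: bigmax_ge_id. Qed.

Lemma col_sum_le_norm1 m n (A : 'M[R]_(m, n)) j : \sum_i `|A i j| <= norm1 A.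
Proof. exact: (le_bigmax _ (fun j => \sum_i `|A i j|)). Qed.

Lemma norm1_le m n (A : 'M[R]_(m, n)) b :
  0 <= b -> (forall j, \sum_i `|A i j| <= b) -> norm1 A <= b.
Proof. by move=> b_ge0 col_le; apply: bigmax_le => // j _; apply: col_le. Qed.

Lemma norm1_absM m n (A : 'M[R]_(m, n)) : norm1 (absM A) = norm1 A.
Proof. by apply: eq_bigr => j _; apply: eq_bigr => i _; rewrite mxE normr_id. Qed.

Lemma norm1_mul m n p (A : 'M[R]_(m, n)) (B : 'M[R]_(n, p)) :
  norm1 (A *m B) <= norm1 A * norm1 B.
Proof.
apply: norm1_le => [|j]; first by rewrite mulr_ge0 ?norm1_ge0.
apply: le_trans (_ : \sum_i \sum_k `|A i k| * `|B k j| <= _).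
  apply: ler_sum => i _; rewrite mxE; apply: le_trans (ler_norm_sum _ _ _) _.
  by apply: ler_sum => k _; rewrite normrM.
rewrite exchange_big /=; apply: le_trans (_ : \sum_k norm1 A * `|B k j| <= _).
  by apply: ler_sum => k _; rewrite -mulr_suml ler_wpM2r // col_sum_le_norm1.
by rewrite -mulr_sumr ler_wpM2l ?norm1_ge0 // col_sum_le_norm1.
Qed.

Lemma norm1_le_scale m n (A M : 'M[R]_(m, n)) t :
  0 <= t -> (forall i j, `|A i j| <= M i j * t) -> norm1 A <= norm1 M * t.
Proof.
move=> t_ge0 A_le; apply: norm1_le => [|j]; first by rewrite mulr_ge0 ?norm1_ge0.
apply: le_trans (_ : \sum_i `|M i j| * t <= _).
  by apply: ler_sum => i _; apply: le_trans (A_le i j) _; rewrite ler_wpM2r ?ler_norm.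
by rewrite -mulr_suml ler_wpM2r ?col_sum_le_norm1.
Qed.

Lemma frob_ge0 m n (A : 'M[R]_(m, n)) : 0 <= frob A.
Proof. exact: sqrtr_ge0. Qed.

Lemma frob_sqr m n (A : 'M[R]_(m, n)) : frob A ^+ 2 = \sum_i \sum_j A i j ^+ 2.
Proof.
by rewrite sqr_sqrtr // sumr_ge0 // => i _; rewrite sumr_ge0 // => j _; rewrite sqr_ge0.
Qed.

Lemma frob_absM m n (A : 'M[R]_(m, n)) : frob (absM A) = frob A.
Proof.
rewrite /frob; congr Num.sqrt; apply: eq_bigr => i _; apply: eq_bigr => j _.
by rewrite mxE real_normK ?num_real.
Qed.

Lemma col_sqr_le_frob m n (A : 'M[R]_(m, n)) j : \sum_i A i j ^+ 2 <= frob A ^+ 2.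
Proof.
rewrite frob_sqr; apply: ler_sum => i _.
by rewrite (bigD1 j) //= lerDl sumr_ge0 // => k _; rewrite sqr_ge0.
Qed.

Lemma frob_mul m n p (A : 'M[R]_(m, n)) (B : 'M[R]_(n, p)) :
  frob (A *m B) <= frob A * frob B.
Proof.
rewrite -ler_sqr ?nnegrE ?mulr_ge0 ?frob_ge0 // exprMn !frob_sqr.
rewrite (exchange_big _ _ _ _ _ (fun k j => B k j ^+ 2)) /= mulr_suml.
apply: ler_sum => i _; rewrite mulr_sumr; apply: ler_sum => j _.
by rewrite mxE; apply: (cauchy_schwarz_sum (fun k => A i k) (fun k => B k j)).
Qed.

Lemma norm1_hadamard_le m n (P Q : 'M[R]_(m, n)) :
  norm1 (hadamard P Q) <= frob P * frob Q.
Proof.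
apply: norm1_le => [|j]; first by rewrite mulr_ge0 ?frob_ge0.
rewrite -ler_sqr ?nnegrE ?mulr_ge0 ?frob_ge0 ?sumr_ge0 // exprMn.
under eq_bigr do rewrite mxE normrM.
apply: le_trans (cauchy_schwarz_sum _ _) _.
have col_le (A : 'M[R]_(m, n)) : \sum_i `|A i j| ^+ 2 <= frob A ^+ 2.
  rewrite (eq_bigr (fun i => A i j ^+ 2)) ?col_sqr_le_frob // => i _.
  by rewrite real_normK ?num_real.
by rewrite ler_pM ?col_le ?sumr_ge0 // => i _; apply: sqr_ge0.
Qed.

Lemma frob_mulmx3_absM m1 m2 m3 m4 (A1 : 'M[R]_(m1, m2)) (A2 : 'M[R]_(m2, m3))
    (A3 : 'M[R]_(m3, m4)) :
  frob (absM A1 *m absM A2 *m absM A3) <= frob A1 * frob A2 * frob A3.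
Proof.
apply: le_trans (frob_mul _ _) _; rewrite frob_absM ler_wpM2r ?frob_ge0 //.
by apply: le_trans (frob_mul _ _) _; rewrite !frob_absM.
Qed.

Lemma norm1_absM_sandwich_hadamard k1 k2 n l1 l2 b1 b2
    (P1 : 'M[R]_(k1, n)) (G1 : 'M[R]_(n, l1)) (H : 'M[R]_(l1, l2)) (G2 : 'M[R]_(l2, n))
    (B1 : 'M[R]_(n, b1)) (X : 'M[R]_(b1, b2)) (B2 : 'M[R]_(b2, n)) (P2 : 'M[R]_(n, k2)) :
  norm1 (absM P1 *m hadamard (absM G1 *m absM H *m absM G2)
                             (absM B1 *m absM X *m absM B2) *m absM P2)
  <= norm1 P1 * frob G1 * frob H * frob G2 * frob B1 * frob X * frob B2 * norm1 P2.
Proof.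
have had_le : norm1 (hadamard (absM G1 *m absM H *m absM G2) (absM B1 *m absM X *m absM B2))
    <= frob G1 * frob H * frob G2 * (frob B1 * frob X * frob B2).
  apply: le_trans (norm1_hadamard_le _ _) _.
  by apply: ler_pM; rewrite ?frob_ge0 ?frob_mulmx3_absM.
apply: le_trans (norm1_mul _ _) _; rewrite norm1_absM.
apply: le_trans (ler_wpM2r (norm1_ge0 _) (norm1_mul _ _)) _; rewrite norm1_absM.
have -> : norm1 P1 * frob G1 * frob H * frob G2 * frob B1 * frob X * frob B2 * norm1 P2 =
    norm1 P1 * (frob G1 * frob H * frob G2 * (frob B1 * frob X * frob B2)) * norm1 P2.
  by ring.
by rewrite ler_wpM2r ?norm1_ge0 // ler_wpM2l ?norm1_ge0.
Qed.

End MatrixNorms.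

Theorem mainTheorem3 (R : rcfType) (no nh : nat)
  (p : 'I_(tc_dim no nh) -> R) (alpha beta gamma K0 : R) :
  (0 < no)%N -> (0 < nh)%N -> injective p ->
  0 <= alpha -> 0 <= beta -> 0 <= gamma ->
  exists K : R,
  forall (fm : fp_model R)
    (dotA dotB : 'rV[R]_(tc_dim no nh) -> 'rV[R]_(tc_dim no nh) -> R)
    (dotG : 'rV[R]_nh -> 'rV[R]_nh -> R)
    (H : 'M[R]_nh) (X : 'M[R]_(tc_dim no nh)),
  fp_eps fm <= 1 ->
  dot_bound fm (tcAT no p) dotA alpha K0 ->
  dot_bound fm (tcBT p) dotB beta K0 ->
  dot_bound fm (tcG nh p) dotG gamma K0 ->
  (forall u y, fp_F fm (dotA u y)) ->
  (forall u y, fp_F fm (dotB u y)) ->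
  (forall u y, fp_F fm (dotG u y)) ->
  (forall i j, fp_F fm (H i j)) ->
  (forall i j, fp_F fm (X i j)) ->
  let AT := tcAT no p in let A := AT^T in
  let G := tcG nh p in let GT := G^T in
  let BT := tcBT p in let B := BT^T in
  let eps := fp_eps fm in
  let c := 2 * alpha + 2 * beta + 2 * gamma + 1 in
  let S := tc_exact AT G BT H X in
  let Shat := tc_computed fm AT G BT dotA dotB dotG H X in
  let M := absM AT *m hadamard (absM G *m absM H *m absM GT)
                               (absM BT *m absM X *m absM B) *m absM A in
  let N := norm1 AT * frob G * frob H * frob GT * frob BT * frob X * frob B
           * norm1 A in
  (forall i j, `|(Shat - S) i j| <= M i j * c * eps + K * eps ^+ 2 * M i j) /\
  norm1 (Shat - S) <= N * c * eps + K * eps ^+ 2 * N.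
Proof.
move=> _ _ _ a_ge0 b_ge0 g_ge0.
have [K _ rel_err_le] := first_order_tc_rel_err a_ge0 b_ge0 g_ge0 (normr_ge0 K0).
exists K => fm dotA dotB dotG H X eps_le1 hA hB hG flA flB flG flH flX.
move=> AT A G GT BT B eps c S Shat M N.
have /rel_err_le/andP[err_ge0 err_le] : 0 <= eps <= 1 by rewrite fp_eps_ge0.
have hS := tc_computed_approx a_ge0 b_ge0 g_ge0 hA hB hG flA flB flG flH flX.
have t_ge0 : 0 <= c * eps + K * eps ^+ 2 := le_trans err_ge0 err_le.
have err_D i j : `|(Shat - S) i j| <= M i j * (c * eps + K * eps ^+ 2).
  have [S_le D_le] := hS i j.
  have -> : (Shat - S) i j = Shat i j - S i j by rewrite !mxE.
  exact: le_trans D_le (ler_wpM2l (le_trans (normr_ge0 _) S_le) err_le).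
split => [i j|].
  by rewrite -mulrA [_ * M i j]mulrC -mulrDr err_D.
have N_le : norm1 M <= N := norm1_absM_sandwich_hadamard AT G H GT BT X B A.
apply: le_trans (norm1_le_scale t_ge0 err_D) _.
by rewrite -mulrA [_ * N]mulrC -mulrDr; apply: ler_wpM2r.
Qed.
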